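(* Let $N\geqslant 2$, $d\geqslant 1$ and $1\leqslant r\leqslant N$ be integers. Let $l_0,\dots,l_r$ be linearly independent linear forms on ${\mathbb C}^{N+1}$ and $\Pi=\{l_0=\dots=l_r=0\}\subset{\mathbb P}^N$. For each $i=1,\dots,r$ fix pairwise distinct constants $\lambda_{i0},\dots,\lambda_{i,d-1}\in{\mathbb C}$ with $\lambda_{i0}=0$. For $\underline e=(e_1,\dots,e_r)\in{\mathbb Z}^r_{\geqslant0}$ with all $e_i\leqslant d-1$ let $\Theta(\underline e)=\{l_i-\lambda_{i,e_i}l_0=0,\ i=1,\dots,r\}\subset{\mathbb P}^N$ (a linear subspace of codimension $r$ containing $\Pi$), and $|\underline e|=e_1+\dots+e_r$. Let $m\leqslant N-r+1$, and for every $\underline e$ with $|\underline e|\leqslant d-3$ let $S(\underline e)\subset\Theta(\underline e)\setminus\Pi$ be a set of $m$ linearly independent points. Then the set of $g\in{\cal P}_{d,N+1}$ satisfying $S(\underline e)\subset\mathop{\rm Sing}(g|_{\Theta(\underline e)})$ for all $\underline e\in{\mathbb Z}^r_{\geqslant0}$ with $|\underline e|\leqslant d-3$ is a linear subspace of ${\cal P}_{d,N+1}$ of codimension $m(N-r+1)|\Delta|$, where $\Delta=\{e_1\geqslant0,\dots,e_r\geqslant0,\ e_1+\dots+e_r\leqslant d-3\}\subset{\mathbb R}^r$ and $|\Delta|=\#(\Delta\cap{\mathbb Z}^r)$.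
   Context: ${\cal P}_{d,N+1}$ is the complex vector space of homogeneous polynomials of degree $d$ in $x_0,\dots,x_N$. For a linear subspace $\Theta\cong{\mathbb P}^{N-r}$, $\mathop{\rm Sing}(g|_\Theta)$ is the singular set of the hypersurface $\{g|_\Theta=0\}$ in $\Theta$, equal to $\Theta$ if $g|_\Theta\equiv0$. *)

From HB Require Import structures.
From mathcomp Require Import all_boot all_order all_algebra.
From mathcomp Require Import mpoly.
Set Implicit Arguments. Unset Strict Implicit. Unset Printing Implicit Defensive.
Import Order.TTheory GRing.Theory Num.Theory.
Local Open Scope ring_scope.

Definition hmonom (n d : nat) := {mm : 'X_{1..n < d.+1} | mdeg (val mm) == d}.

(* P_{d,n}: homogeneous polynomials of degree d in n variables, represented
   by their coefficient vectors (one coordinate per degree-d monomial). *)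
Definition Pdn (C : fieldType) (n d : nat) := 'rV[C]_(#|{: hmonom n d}|).

Definition poly_of (C : fieldType) (n d : nat) (g : Pdn C n d) : {mpoly C[n]} :=
  \sum_(h : hmonom n d) g 0 (enum_rank h) *: 'X_[val (val h)].

Definition lform (C : fieldType) (k n : nat) (L : 'M[C]_(k, n)) (j : 'I_k)
  (x : 'rV[C]_n) : C := \sum_(t < n) L j t * x 0 t.

Definition evalv (C : fieldType) (n : nat) (p : {mpoly C[n]}) (x : 'rV[C]_n) : C :=
  p.@[fun t => x 0 t].

(* Sing(p|_Theta) where Theta = P(W) and W = {v | inW v} a linear subspace;
   x is (a representative of) a point of P^{n-1}: x lies in Sing(p|_Theta)
   iff x is a nonzero vector of W, p(x) = 0 and every partial derivative of the
   restriction p|_W vanishes at x, i.e. every directional derivative of p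
   along vectors of W vanishes at x. *)
Definition in_Sing_restr (C : fieldType) (n : nat) (p : {mpoly C[n]})
  (inW : 'rV[C]_n -> Prop) (x : 'rV[C]_n) : Prop :=
  [/\ x != 0, inW x, evalv p x = 0 &
      forall v, inW v -> \sum_(t < n) v 0 t * evalv (mderiv t p) x = 0].

(* The linear forms l_0,...,l_r are the rows of L : 'M_(r.+1, n);
   l_0 = row ord0, l_i = row (lift ord0 i') for i' : 'I_r (i = i'+1). *)
(* Membership of a vector v of C^{N+1} in the linear subspace W(e) whose
   projectivisation is Theta(e) = {l_i - lambda_{i,e_i} l_0 = 0, i=1..r}. *)
Definition inTheta (C : fieldType) (r n d : nat) (L : 'M[C]_(r.+1, n))
  (lam : 'I_r -> 'I_d -> C) (e : {ffun 'I_r -> 'I_d}) (v : 'rV[C]_n) : Prop :=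
  forall i : 'I_r, lform L (lift ord0 i) v - lam i (e i) * lform L ord0 v = 0.

Definition inPi (C : fieldType) (r n : nat) (L : 'M[C]_(r.+1, n)) (v : 'rV[C]_n) : Prop :=
  forall j : 'I_r.+1, lform L j v = 0.

Definition esize (r d : nat) (e : {ffun 'I_r -> 'I_d}) : nat := (\sum_(i < r) val (e i))%N.

(* e in Delta, i.e. |e| <= d - 3 (with the integer, not truncated, d - 3). *)
Definition inDelta (r d : nat) (e : {ffun 'I_r -> 'I_d}) : bool := (esize e + 3 <= d)%N.

From HB Require Import structures.
From mathcomp Require Import all_boot all_order all_algebra.
From mathcomp Require Import mpoly.
From mathcomp Require Import ring zify.
Set Implicit Arguments. Unset Strict Implicit. Unset Printing Implicit Defensive.
Import Order.TTheory GRing.Theory Num.Theory.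
Local Open Scope ring_scope.

(* The conditions are linear in g: at a point s of Theta(e) the derivatives of g
   along a basis of Theta(e) must vanish, and then g(s) = 0 follows from Euler's
   formula since d != 0.  So the locus is the kernel of a linear map onto
   C^(m (N-r+1) |Delta|), and only surjectivity needs proof.  Coordinates are
   reached by descending induction on |e|: the product h_e of the forms
   l_i - lambda_ij l_0 (j < e_i) vanishes identically on every Theta(e') with
   some e'_i < e_i but not at the points of S(e), so multiplying by h_e isolates
   the block of e modulo blocks with larger |e'|.  Inside that block, with
   D = d - |e| >= 3 and phi a linear form dual to the points of S(e), the
   polynomials h_e phi^(D-1) c and h_e phi^D produce every coordinate. *)

Section Calculus.
Variables (C : fieldType) (n : nat).
Implicit Types (p q : {mpoly C[n]}) (c v w x : 'rV[C]_n).

Definition dotr c x : C := \sum_(t < n) c 0 t * x 0 t.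

Definition linpoly c : {mpoly C[n]} := \sum_(t < n) c 0 t *: 'X_t.

Definition gradv p x : 'rV[C]_n := \row_t evalv (mderiv t p) x.

Definition dirderiv p v x : C := \sum_(t < n) v 0 t * evalv (mderiv t p) x.

Lemma evalvD p q x : evalv (p + q) x = evalv p x + evalv q x.
Proof. exact: mevalD. Qed.

Lemma evalvZ a p x : evalv (a *: p) x = a * evalv p x.
Proof. exact: mevalZ. Qed.

Lemma evalvM p q x : evalv (p * q) x = evalv p x * evalv q x.
Proof. exact: mevalM. Qed.

Lemma evalvX p k x : evalv (p ^+ k) x = evalv p x ^+ k.
Proof. exact: rmorphXn. Qed.

Lemma evalv_sum I (s : seq I) (P : pred I) (F : I -> {mpoly C[n]}) x :
  evalv (\sum_(i <- s | P i) F i) x = \sum_(i <- s | P i) evalv (F i) x.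
Proof. exact: raddf_sum. Qed.

Lemma evalv_prod I (s : seq I) (P : pred I) (F : I -> {mpoly C[n]}) x :
  evalv (\prod_(i <- s | P i) F i) x = \prod_(i <- s | P i) evalv (F i) x.
Proof. exact: rmorph_prod. Qed.

Lemma evalv_mderivX s t x : evalv (mderiv t 'X_s) x = (s == t)%:R.
Proof.
rewrite mderivX mnm1E evalvZ; case: eqP => [->|_]; last by rewrite mul0r.
by rewrite -{1}[U_(t)%MM]add0m addmK mpolyX0 /evalv meval1 mulr1.
Qed.

Lemma evalv_linpoly c x : evalv (linpoly c) x = dotr c x.
Proof. by rewrite evalv_sum; apply: eq_bigr => t _; rewrite evalvZ /evalv mevalXU. Qed.

Lemma dotrDl c1 c2 x : dotr (c1 + c2) x = dotr c1 x + dotr c2 x.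
Proof. by rewrite /dotr -big_split; apply: eq_bigr => t _; rewrite mxE mulrDl. Qed.

Lemma dotrZl a c x : dotr (a *: c) x = a * dotr c x.
Proof. by rewrite /dotr mulr_sumr; apply: eq_bigr => t _; rewrite mxE mulrA. Qed.

Lemma dotrBl c1 c2 x : dotr (c1 - c2) x = dotr c1 x - dotr c2 x.
Proof. by rewrite dotrDl -scaleN1r dotrZl mulN1r. Qed.

Lemma dotr_trcol k l (A : 'M[C]_(l, n)) (Q : 'M[C]_(n, k)) i j :
  dotr (col j Q)^T (row i A) = (A *m Q) i j.
Proof. by rewrite /dotr mxE; apply: eq_bigr => t _; rewrite !mxE mulrC. Qed.

Lemma dirderiv_gradv p v x : dirderiv p v x = dotr (gradv p x) v.
Proof. by apply: eq_bigr => t _; rewrite mxE mulrC. Qed.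

Lemma dirderiv0 v x : dirderiv 0 v x = 0.
Proof. by rewrite /dirderiv big1 // => t _; rewrite mderiv0 /evalv meval0 mulr0. Qed.

Lemma dirderivD p q v x : dirderiv (p + q) v x = dirderiv p v x + dirderiv q v x.
Proof. by rewrite /dirderiv -big_split; apply: eq_bigr => t _; rewrite mderivD evalvD mulrDr. Qed.

Lemma dirderivZ a p v x : dirderiv (a *: p) v x = a * dirderiv p v x.
Proof. by rewrite /dirderiv mulr_sumr; apply: eq_bigr => t _; rewrite mderivZ evalvZ mulrCA. Qed.

Lemma dirderiv_sum I (s : seq I) (P : pred I) (F : I -> {mpoly C[n]}) v x :
  dirderiv (\sum_(i <- s | P i) F i) v x = \sum_(i <- s | P i) dirderiv (F i) v x.
Proof.
exact: (big_morph (fun p => dirderiv p v x) (fun p q => dirderivD p q v x) (dirderiv0 v x)).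
Qed.

Lemma dirderivM p q v x :
  dirderiv (p * q) v x = dirderiv p v x * evalv q x + evalv p x * dirderiv q v x.
Proof.
rewrite /dirderiv mulr_suml mulr_sumr -big_split; apply: eq_bigr => t _.
by rewrite mderivM evalvD !evalvM /=; ring.
Qed.

Lemma dirderiv1 v x : dirderiv 1 v x = 0.
Proof. by rewrite /dirderiv big1 // => t _; rewrite -mpolyC1 mderivC /evalv meval0 mulr0. Qed.

Lemma dirderivX p k v x :
  dirderiv (p ^+ k) v x = k%:R * evalv p x ^+ k.-1 * dirderiv p v x.
Proof.
elim: k => [|k IH]; first by rewrite expr0 dirderiv1 !mul0r.
rewrite exprS dirderivM IH evalvX; case: k {IH} => [|k] /=; last by rewrite exprS [k.+2%:R]mulrS; ring.
by rewrite !expr0 !mul0r mulr0 addr0 mulr1 !mul1r.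
Qed.

Lemma dirderiv_X s v x : dirderiv 'X_s v x = v 0 s.
Proof.
rewrite /dirderiv (bigD1 s) //= evalv_mderivX eqxx mulr1 big1 ?addr0 // => t /negbTE ts.
by rewrite evalv_mderivX eq_sym ts mulr0.
Qed.

Lemma dirderiv_linpoly c v x : dirderiv (linpoly c) v x = dotr c v.
Proof.
rewrite dirderiv_sum; apply: eq_bigr => s _.
by rewrite dirderivZ dirderiv_X mulrC.
Qed.

Lemma dirderiv_mulmx k p (a : 'rV[C]_k) (B : 'M[C]_(k, n)) x :
  dirderiv p (a *m B) x = \sum_(j < k) a 0 j * dirderiv p (row j B) x.
Proof.
rewrite /dirderiv; under eq_bigr => t _ do rewrite mxE mulr_suml.
rewrite exchange_big /=; apply: eq_bigr => j _; rewrite mulr_sumr.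
by apply: eq_bigr => t _; rewrite mxE mulrA.
Qed.

Lemma dirderiv_prod_euler I (s : seq I) (F : I -> {mpoly C[n]}) (k : I -> nat) x :
  (forall i, dirderiv (F i) x x = (k i)%:R * evalv (F i) x) ->
  dirderiv (\prod_(i <- s) F i) x x = (\sum_(i <- s) k i)%:R * evalv (\prod_(i <- s) F i) x.
Proof.
move=> HF; elim: s => [|a s IH]; first by rewrite !big_nil dirderiv1 mul0r.
by rewrite !big_cons dirderivM IH HF evalvM natrD; ring.
Qed.

Lemma dirderiv_monomial_euler (mm : 'X_{1..n}) x :
  dirderiv 'X_[mm] x x = (mdeg mm)%:R * evalv 'X_[mm] x.
Proof.
rewrite mpolyXE_id mdegE; apply: dirderiv_prod_euler => t.
rewrite dirderivX evalvX dirderiv_X /evalv mevalXU.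
by case: (mm t) => [|k] /=; rewrite ?mul0r // exprS; ring.
Qed.

Lemma dirderiv_homog_euler k p x :
  p \is k.-homog -> dirderiv p x x = k%:R * evalv p x.
Proof.
move=> /dhomogP hp; rewrite [p]mpolyE dirderiv_sum evalv_sum mulr_sumr.
rewrite big_seq_cond [RHS]big_seq_cond; apply: eq_bigr => mm /andP[mm_supp _].
by rewrite dirderivZ evalvZ dirderiv_monomial_euler (hp mm mm_supp) mulrCA.
Qed.

Lemma linpoly_homog c : linpoly c \is 1.-homog.
Proof. by apply: rpred_sum => t _; apply: rpredZ; rewrite dhomogX /= mdeg1. Qed.

Lemma dhomog_big_prod I (s : seq I) (P : pred I) (F : I -> {mpoly C[n]}) (k : I -> nat) :
  (forall i, P i -> F i \is (k i).-homog) ->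
  \prod_(i <- s | P i) F i \is (\sum_(i <- s | P i) k i)%N.-homog.
Proof.
move=> F_homog; apply: (big_ind2 (fun p k => p \is k.-homog)) => [|p1 k1 p2 k2|].
- exact: dhomog1.
- exact: dhomogM.
- exact: F_homog.
Qed.

End Calculus.

Section CoefficientVectors.
Variables (C : fieldType) (n d : nat).

Lemma poly_ofDZ a (g1 g2 : Pdn C n d) :
  poly_of (a *: g1 + g2) = a *: poly_of g1 + poly_of g2.
Proof.
rewrite /poly_of scaler_sumr -big_split; apply: eq_bigr => h _.
by rewrite !mxE scalerDl scalerA.
Qed.

Lemma poly_of_homog (g : Pdn C n d) : poly_of g \is d.-homog.
Proof.
apply: rpred_sum => h _; apply: rpredZ.
by rewrite dhomogX /=; exact: (svalP h).
Qed.

Lemma poly_of_onto (p : {mpoly C[n]}) :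
  p \is d.-homog -> exists g : Pdn C n d, poly_of g = p.
Proof.
move=> p_homog; exists (\row_i p@_(val (val (enum_val i)))).
apply/mpolyP => mm; rewrite /poly_of raddf_sum /=.
under eq_bigr => h _ do rewrite mxE enum_rankK mcoeffZ mcoeffX.
have [mm_deg|mm_deg] := eqVneq (mdeg mm) d; last first.
  rewrite (dhomog_nemf_coeff p_homog mm_deg) big1 // => h _.
  case: eqP => [mmE|]; last by rewrite mulr0.
  by move: (svalP h); rewrite mmE (negbTE mm_deg).
have mm_bnd : (mdeg mm < d.+1)%N by rewrite mm_deg.
pose h0 : hmonom n d := exist _ (BMultinom mm_bnd) (introT eqP mm_deg).
rewrite (bigD1 h0) //= eqxx mulr1 big1 ?addr0 // => h h_neq.
case: eqP => [mmE|]; last by rewrite mulr0.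
by case/eqP: h_neq; do 2!apply: val_inj; rewrite /= mmE.
Qed.

Definition dirderiv_map (I : finType) (w x : I -> 'rV[C]_n) (g : Pdn C n d) : 'rV[C]_#|{: I}| :=
  \row_j dirderiv (poly_of g) (w (enum_val j)) (x (enum_val j)).

Lemma dirderiv_map_is_linear (I : finType) (w x : I -> 'rV[C]_n) :
  linear (dirderiv_map w x).
Proof. by move=> a g1 g2; apply/rowP => j; rewrite !mxE poly_ofDZ dirderivD dirderivZ. Qed.

HB.instance Definition _ (I : finType) (w x : I -> 'rV[C]_n) :=
  GRing.isLinear.Build C (Pdn C n d) 'rV[C]_#|{: I}| _ (dirderiv_map w x)
    (dirderiv_map_is_linear w x).

Lemma dirderiv_mapE (I : finType) (w x : I -> 'rV[C]_n) (g : Pdn C n d) :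
  dirderiv_map w x g = \sum_(i : I) dirderiv (poly_of g) (w i) (x i) *: delta_mx 0 (enum_rank i).
Proof.
rewrite [LHS]row_sum_delta (reindex enum_rank) /=; last first.
  by exists enum_val => i _; [rewrite enum_rankK | rewrite enum_valK].
by apply: eq_bigr => i _; rewrite mxE enum_rankK.
Qed.

Lemma dirderiv_map_eq0 (I : finType) (w x : I -> 'rV[C]_n) (g : Pdn C n d) :
  dirderiv_map w x g = 0 <-> forall i, dirderiv (poly_of g) (w i) (x i) = 0.
Proof.
split => [/rowP g0 i|g0]; last by apply/rowP => j; rewrite !mxE g0.
by have := g0 (enum_rank i); rewrite !mxE enum_rankK.
Qed.

End CoefficientVectors.

Lemma row_free_dual (C : fieldType) m n (A : 'M[C]_(m, n)) :
  row_free A -> forall k, exists phi : 'rV[C]_n, forall k', dotr phi (row k' A) = (k' == k)%:R.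
Proof.
move=> /row_freeP [Q AQ] k; exists (col k Q)^T => k'.
by rewrite dotr_trcol AQ mxE.
Qed.

Lemma theta_basis (C : fieldType) r n (L : 'M[C]_(r.+1, n)) (mu : 'I_r -> C) :
  row_free L ->
  exists K : 'M[C]_(n - r, n), row_free K /\
    forall v, (forall i, lform L (lift ord0 i) v - mu i * lform L ord0 v = 0) <-> (v <= K)%MS.
Proof.
move=> L_free.
(* The rows of [T *m L] are the forms l_i - mu_i l_0. *)
pose T : 'M[C]_(r, r.+1) := \matrix_(i, j) ((j == lift ord0 i)%:R - (j == ord0)%:R * mu i).
pose B : 'M[C]_(n, r) := (T *m L)^T.
have ord0_lift (i : 'I_r) : (ord0 == lift ord0 i) = false := negbTE (neq_lift _ _).
have lift_ord0 (i : 'I_r) : (lift ord0 i == ord0) = false by rewrite eq_sym ord0_lift.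
have T_free : row_free T.
  apply/row_freeP; exists (\matrix_(j, k) (j == lift ord0 k)%:R).
  apply/matrixP => i k; rewrite !mxE big_ord_recl !mxE ord0_lift mulr0 add0r.
  rewrite (bigD1 k) //= big1 => [|j /negbTE jk]; last first.
    by rewrite !mxE !(inj_eq (@lift_inj _ ord0)) jk mulr0.
  by rewrite !mxE !(inj_eq (@lift_inj _ ord0)) lift_ord0 eqxx (eq_sym k i) /=; ring.
have rank_ker : \rank (kermx B) = (n - r)%N.
  by rewrite mxrank_ker mxrank_tr mxrankMfree // (eqP T_free).
have vB v i : (v *m B) 0 i = lform L (lift ord0 i) v - mu i * lform L ord0 v.
  rewrite !mxE /lform mulr_sumr -sumrB; apply: eq_bigr => t _.
  rewrite !mxE big_ord_recl (bigD1 i) //= big1 => [|j /negbTE ji]; last first.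
    by rewrite !mxE (inj_eq (@lift_inj _ ord0)) ji lift_ord0 /= mul0r subrr mul0r.
  by rewrite !mxE !eqxx lift_ord0 /= mul0r mul1r sub0r subr0 mul1r addr0; ring.
rewrite -rank_ker; exists (row_base (kermx B)); split => [|v]; first exact: row_base_free.
rewrite eq_row_base sub_kermx; split => [v_in|/eqP vB0 i]; last by rewrite -vB vB0 mxE.
by apply/eqP/rowP => i; rewrite vB v_in mxE.
Qed.

Section ThetaPoly.
Variables (C : fieldType) (r n d : nat) (L : 'M[C]_(r.+1, n)) (lam : 'I_r -> 'I_d -> C).

Definition theta_form i j : 'rV[C]_n := row (lift ord0 i) L - lam i j *: row ord0 L.

Definition theta_poly (e : {ffun 'I_r -> 'I_d}) : {mpoly C[n]} :=
  \prod_(i < r) \prod_(j < d | (j < e i)%N) linpoly (theta_form i j).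

Lemma dotr_theta_form i j x :
  dotr (theta_form i j) x = lform L (lift ord0 i) x - lam i j * lform L ord0 x.
Proof.
by rewrite dotrBl dotrZl /dotr /lform; congr (_ - _ * _); apply: eq_bigr => t _; rewrite mxE.
Qed.

Lemma theta_poly_homog e : theta_poly e \is (esize e).-homog.
Proof.
apply: dhomog_big_prod => i _.
have -> : val (e i) = (\sum_(j < d | (j < e i)%N) 1)%N.
  by rewrite -(big_ord_widen _ (fun=> 1%N) (ltnW (ltn_ord (e i)))) sum1_card card_ord.
by apply: (@dhomog_big_prod _ _ _ _ _ _ (fun=> 1%N)) => j _; exact: linpoly_homog.
Qed.

Lemma lform0_neq0 e x : inTheta L lam e x -> ~ inPi L x -> lform L ord0 x != 0.
Proof.
move=> x_theta x_nPi; apply/eqP => x0; apply: x_nPi => j.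
by case: (unliftP ord0 j) => [i ->|->] //; have := x_theta i; rewrite x0 mulr0 subr0.
Qed.

Lemma theta_poly_neq0 e x :
  (forall i, injective (lam i)) -> inTheta L lam e x -> ~ inPi L x ->
  evalv (theta_poly e) x != 0.
Proof.
move=> lam_inj x_theta x_nPi; have l0x := lform0_neq0 x_theta x_nPi.
rewrite evalv_prod prodf_seq_neq0; apply/allP => i _ /=.
rewrite evalv_prod prodf_seq_neq0; apply/allP => j _; apply/implyP => j_lt.
rewrite evalv_linpoly dotr_theta_form.
rewrite (_ : lform L (lift ord0 i) x = lam i (e i) * lform L ord0 x); last first.
  by apply/eqP; rewrite -subr_eq0; apply/eqP; exact: x_theta.
rewrite -mulrBl mulf_neq0 // subr_eq0; apply/eqP => /lam_inj eij.
by move: j_lt; rewrite eij ltnn.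
Qed.

Lemma theta_poly_dirderiv_vanish (e e' : {ffun 'I_r -> 'I_d}) i0 (F : {mpoly C[n]}) w x :
  (e' i0 < e i0)%N -> inTheta L lam e' w -> inTheta L lam e' x ->
  dirderiv (theta_poly e * F) w x = 0.
Proof.
move=> lt_e'e w_theta x_theta.
rewrite /theta_poly (bigD1 i0) //= (bigD1 (e' i0)) //= -!mulrA dirderivM evalvM.
rewrite evalv_linpoly dirderiv_linpoly !dotr_theta_form.
by rewrite w_theta x_theta !mul0r add0r.
Qed.

End ThetaPoly.

Section TestPolynomials.
Variables (C : fieldType) (n : nat) (h : {mpoly C[n]}) (phi c w x : 'rV[C]_n) (D : nat).

Lemma dirderiv_mul_linpow_root :
  (2 <= D)%N -> dotr phi x = 0 -> dirderiv (h * linpoly phi ^+ D) w x = 0.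
Proof.
move=> D_ge2 phix; rewrite dirderivM dirderivX evalvX evalv_linpoly phix.
by case: D D_ge2 => [|[|D']] //= _; rewrite !expr0n /= !(mulr0, mul0r, addr0).
Qed.

Lemma dirderiv_mul_linpow_unit :
  dotr phi x = 1 ->
  dirderiv (h * linpoly phi ^+ D) w x = dirderiv h w x + evalv h x * D%:R * dotr phi w.
Proof.
move=> phix; rewrite dirderivM dirderivX evalvX evalv_linpoly phix dirderiv_linpoly.
by rewrite !expr1n mulr1 mulr1 mulrA.
Qed.

Lemma dirderiv_mul_lin_linpow_unit :
  dotr phi x = 1 -> dotr c x = 0 ->
  dirderiv (h * (linpoly c * linpoly phi ^+ D)) w x = evalv h x * dotr c w.
Proof.
move=> phix cx; rewrite !dirderivM dirderivX !evalvM evalvX !evalv_linpoly phix cx.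
by rewrite !dirderiv_linpoly expr1n; ring.
Qed.

End TestPolynomials.

Lemma ltn_esize r d (e e' : {ffun 'I_r -> 'I_d}) :
  (forall t, e t <= e' t)%N -> e != e' -> (esize e < esize e')%N.
Proof.
move=> le_ee' neq_ee'.
have [le_sum eq_sum] := @leqif_sum _ predT _ _ _ (fun i _ => leqif_eq (le_ee' i)).
rewrite /esize ltn_neqAle le_sum eq_sum andbT; apply: contra neq_ee' => /forallP ee'.
by apply/eqP/ffunP => i; apply: val_inj; apply/eqP; exact: ee'.
Qed.

Section SingularLocus.
Variables (C : fieldType) (n d r m k : nat).
Variables (L : 'M[C]_(r.+1, n)) (lam : 'I_r -> 'I_d -> C).
Variables (S : {ffun 'I_r -> 'I_d} -> 'M[C]_(m, n)) (K : {ffun 'I_r -> 'I_d} -> 'M[C]_(k, n)).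
Hypothesis d_neq0 : d%:R != 0 :> C.
Hypothesis lam_inj : forall i, injective (lam i).
Hypothesis K_free : forall e, row_free (K e).
Hypothesis K_span : forall e v, inTheta L lam e v <-> (v <= K e)%MS.
Hypothesis S_free : forall e, inDelta e -> row_free (S e).
Hypothesis S_theta : forall e, inDelta e -> forall k, inTheta L lam e (row k (S e)).
Hypothesis S_nPi : forall e, inDelta e -> forall k, ~ inPi L (row k (S e)).

Definition Delta := {e : {ffun 'I_r -> 'I_d} | inDelta e}.

(* Index (e, k, j) stands for the derivative along [row j (K e)] at [row k (S e)]. *)
Definition cond_index := (Delta * 'I_m * 'I_k)%type.

Let dir (i : cond_index) := row i.2 (K (val i.1.1)).
Let pt (i : cond_index) := row i.1.2 (S (val i.1.1)).

Definition sing_map := linfun (@dirderiv_map C n d cond_index dir pt).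

Let unit_vec (i : cond_index) : 'rV[C]_#|{: cond_index}| := delta_mx 0 (enum_rank i).

Lemma dir_theta i : inTheta L lam (val i.1.1) (dir i).
Proof. by apply/K_span; exact: row_sub. Qed.

Lemma sing_locusE (g : Pdn C n d) :
  (forall e, inDelta e -> forall k,
      in_Sing_restr (poly_of g) (inTheta L lam e) (row k (S e))) <->
  sing_map g = 0.
Proof.
rewrite lfunE /= dirderiv_map_eq0; split=> [g_sing [[es k0] j]|g_crit e e_Delta k0].
  by have [_ _ _ g_dir] := g_sing _ (valP es) k0; exact: g_dir _ (dir_theta (es, k0, j)).
set x := row k0 (S e); have x_theta : inTheta L lam e x := S_theta e_Delta k0.
have g_dir v : inTheta L lam e v -> dirderiv (poly_of g) v x = 0.
  move=> /K_span /submxP [a ->]; rewrite dirderiv_mulmx big1 // => j _.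
  by rewrite (g_crit (exist _ e e_Delta, k0, j)) mulr0.
split=> //.
- apply/eqP => x0; case: (@S_nPi e e_Delta k0) => j.
  by rewrite -/x x0 /lform big1 // => t _; rewrite mxE mulr0.
- apply/eqP; rewrite -(mulrI_eq0 _ (lregP d_neq0)).
  by rewrite -(dirderiv_homog_euler _ (poly_of_homog g)) g_dir.
Qed.

Lemma homog_dirderivs_in_img (P : {mpoly C[n]}) : P \is d.-homog ->
  \sum_i dirderiv P (dir i) (pt i) *: unit_vec i \in limg sing_map.
Proof.
move=> /poly_of_onto [g <-]; rewrite -dirderiv_mapE -[dirderiv_map _ _ _]lfunE.
exact: memv_img (memvf g).
Qed.

Section Step.
Variable es : Delta.
Let e := val es.
Let h := theta_poly L lam e.
Let s k0 := row k0 (S e).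
Hypothesis higher_in_img :
  forall i : cond_index, (esize e < esize (val i.1.1))%N -> unit_vec i \in limg sing_map.

Let e_Delta : inDelta e := valP es.
Let Ds := (d - esize e)%N.
Let Ds_ge3 : (3 <= Ds)%N. Proof. by have := e_Delta; rewrite /inDelta /Ds; lia. Qed.
Let esize_le_d : (esize e <= d)%N. Proof. by have := e_Delta; rewrite /inDelta; lia. Qed.
Let h_s_neq0 k0 : evalv h (s k0) != 0.
Proof. exact: theta_poly_neq0 lam_inj (S_theta e_Delta k0) (@S_nPi e e_Delta k0). Qed.

Lemma block_in_img F : F \is Ds.-homog ->
  \sum_(i | i.1.1 == es) dirderiv (h * F) (dir i) (pt i) *: unit_vec i \in limg sing_map.
Proof.
move=> F_homog; have hF_homog : h * F \is d.-homog.
  by have := dhomogM (theta_poly_homog L lam e) F_homog; rewrite subnKC.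
have := homog_dirderivs_in_img hF_homog; rewrite (bigID (fun i => i.1.1 == es)) /= rpredDr //.
apply: rpred_sum => i i_ne; have [le_e|] := boolP [forall t, e t <= val i.1.1 t]%N.
  apply/rpredZ/higher_in_img/ltn_esize => [t|]; first exact: (forallP le_e t).
  by apply: contra i_ne => /eqP eE; apply/eqP/val_inj.
move=> /forallPn [t]; rewrite -ltnNge => lt_t.
have pt_theta : inTheta L lam (val i.1.1) (pt i) := S_theta (valP i.1.1) _.
by rewrite (theta_poly_dirderiv_vanish _ lt_t (dir_theta i) pt_theta) scale0r rpred0.
Qed.

Definition coord_vec k0 (c : 'rV[C]_n) :=
  \sum_(i : cond_index | (i.1.1 == es) && (i.1.2 == k0)) dotr c (dir i) *: unit_vec i.

Lemma coord_vecZ k0 a c : coord_vec k0 (a *: c) = a *: coord_vec k0 c.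
Proof. by rewrite /coord_vec scaler_sumr; apply: eq_bigr => i _; rewrite dotrZl scalerA. Qed.

Lemma coord_vecD k0 c1 c2 : coord_vec k0 (c1 + c2) = coord_vec k0 c1 + coord_vec k0 c2.
Proof. by rewrite /coord_vec -big_split; apply: eq_bigr => i _; rewrite dotrDl scalerDl. Qed.

Lemma coord_vec_in_img_of k0 F c : F \is Ds.-homog ->
  (forall i, i.1.1 == es ->
     dirderiv (h * F) (dir i) (pt i) = (i.1.2 == k0)%:R * dotr c (dir i)) ->
  coord_vec k0 c \in limg sing_map.
Proof.
move=> F_homog hF_dir; have := block_in_img F_homog.
rewrite (eq_bigr _ (fun i i_es => congr1 (fun a => a *: _) (hF_dir i i_es))).
rewrite (bigID (fun i => i.1.2 == k0)) /= [X in _ + X]big1 ?addr0 => [|i /andP[_ /negbTE ->]].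
  by under eq_bigr => i /andP[_ ->] do rewrite mul1r.
by rewrite mul0r scale0r.
Qed.

Lemma coord_vec_root_in_img k0 c : dotr c (s k0) = 0 -> coord_vec k0 c \in limg sing_map.
Proof.
move=> c_s; have [phi phi_s] := row_free_dual (S_free e_Delta) k0.
have : coord_vec k0 (evalv h (s k0) *: c) \in limg sing_map.
  apply: (@coord_vec_in_img_of _ (linpoly c * linpoly phi ^+ Ds.-1)) => [|[[es' k'] j] /= /eqP ->].
    have := dhomogM (linpoly_homog c) (dhomogMn Ds.-1 (linpoly_homog phi)).
    by rewrite mul1n add1n prednK // (leq_trans _ Ds_ge3).
  have [->|k'_ne] := eqVneq k' k0.
    by rewrite mul1r dirderiv_mul_lin_linpow_unit ?phi_s ?eqxx // dotrZl.
  rewrite mulrA dirderiv_mul_linpow_root ?phi_s ?(negbTE k'_ne) ?mul0r //.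
  by rewrite -ltnS prednK // (leq_trans _ Ds_ge3).
by rewrite coord_vecZ => /(memvZ (evalv h (s k0))^-1); rewrite scalerA mulVf ?h_s_neq0 ?scale1r.
Qed.

Lemma coord_vec_nonroot_in_img k0 :
  exists2 beta, dotr beta (s k0) != 0 & coord_vec k0 beta \in limg sing_map.
Proof.
have [phi phi_s] := row_free_dual (S_free e_Delta) k0.
exists (gradv h (s k0) + (evalv h (s k0) * Ds%:R) *: phi).
  rewrite dotrDl dotrZl -dirderiv_gradv (dirderiv_homog_euler _ (theta_poly_homog L lam e)).
  by rewrite phi_s eqxx mulr1 mulrC -mulrDr -natrD subnKC ?mulf_neq0 ?h_s_neq0.
apply: (@coord_vec_in_img_of _ (linpoly phi ^+ Ds)) => [|[[es' k'] j] /= /eqP ->].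
  by have := dhomogMn Ds (linpoly_homog phi); rewrite mul1n.
have [->|k'_ne] := eqVneq k' k0.
  rewrite mul1r dirderiv_mul_linpow_unit ?phi_s ?eqxx //.
  by rewrite dotrDl dotrZl -dirderiv_gradv.
by rewrite dirderiv_mul_linpow_root ?phi_s ?(negbTE k'_ne) ?mul0r // (leq_trans _ Ds_ge3).
Qed.

Lemma coord_vec_in_img k0 c : coord_vec k0 c \in limg sing_map.
Proof.
have [beta beta_s beta_img] := coord_vec_nonroot_in_img k0.
pose a := dotr c (s k0) / dotr beta (s k0).
rewrite -(subrK (a *: beta) c) coord_vecD coord_vecZ memvD ?memvZ //.
by apply: coord_vec_root_in_img; rewrite dotrBl dotrZl divfK // subrr.
Qed.

Lemma unit_vec_in_img_step k0 j : unit_vec (es, k0, j) \in limg sing_map.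
Proof.
have [psi psi_K] := row_free_dual (K_free e) j.
suff <- : coord_vec k0 psi = unit_vec (es, k0, j) by exact: coord_vec_in_img.
rewrite /coord_vec (bigD1 (es, k0, j)) ?eqxx //= psi_K eqxx scale1r big1 ?addr0 //.
move=> [[es' k'] j'] /andP[/andP[/eqP/= -> /eqP/= ->]].
by rewrite psi_K; have [->|_] := eqVneq j' j; rewrite ?eqxx ?scale0r.
Qed.

End Step.

Lemma unit_vec_in_img i : unit_vec i \in limg sing_map.
Proof.
have [b] := ubnPleq (d - esize (val i.1.1))%N.
elim: b i => [|b IH] [[es k0] j] /= le_b; have es_Delta : (esize (sval es) + 3 <= d)%N := valP es.
  by exfalso; lia.
by apply: unit_vec_in_img_step => i' lt_es; apply: IH; move: lt_es; rewrite /=; lia.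
Qed.

Lemma sing_map_onto : limg sing_map = fullv.
Proof.
apply/eqP; rewrite eqEsubv subvf /=; apply/subvP => y _.
rewrite [y]row_sum_delta; apply: memv_suml => j _; apply: memvZ.
by rewrite -[j]enum_valK; exact: unit_vec_in_img.
Qed.

Lemma sing_locus_dim :
  (\dim (lker sing_map) + #|{: cond_index}| = \dim (fullv : {vspace Pdn C n d}))%N.
Proof.
by rewrite -(limg_ker_dim sing_map fullv) capfv sing_map_onto dimvf /dim /= mul1n.
Qed.

End SingularLocus.

Unset Implicit Arguments.

Theorem proposition2p2 (C : numClosedFieldType) (N d r m : nat)
  (HN : (2 <= N)%N) (Hd : (1 <= d)%N) (Hr1 : (1 <= r)%N) (HrN : (r <= N)%N)
  (L : 'M[C]_(r.+1, N.+1)) (HL : row_free L)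
  (lam : 'I_r -> 'I_d -> C)
  (Hlam_inj : forall i : 'I_r, injective (lam i))
  (Hlam0 : forall (i : 'I_r) (k : 'I_d), val k = 0%N -> lam i k = 0)
  (Hm : (m <= N - r + 1)%N)
  (S : {ffun 'I_r -> 'I_d} -> 'M[C]_(m, N.+1))
  (HSfree : forall e, inDelta e -> row_free (S e))
  (HSTheta : forall e, inDelta e -> forall k : 'I_m, inTheta L lam e (row k (S e)))
  (HSPi : forall e, inDelta e -> forall k : 'I_m, ~ inPi L (row k (S e))) :
  exists U : {vspace Pdn C N.+1 d},
    (forall g : Pdn C N.+1 d,
        g \in U <->
        (forall e, inDelta e -> forall k : 'I_m,
            in_Sing_restr (poly_of g) (inTheta L lam e) (row k (S e))))
    /\ (\dim U + m * (N - r + 1) * #|[set e : {ffun 'I_r -> 'I_d} | inDelta e]|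
        = \dim (fullv : {vspace Pdn C N.+1 d}))%N.
Proof.
have d_neq0 : d%:R != 0 :> C by rewrite pnatr_eq0 -lt0n.
have K_ex (e : {ffun 'I_r -> 'I_d}) : exists K : 'M[C]_(N.+1 - r, N.+1),
    row_free K /\ forall v, inTheta L lam e v <-> (v <= K)%MS.
  exact: theta_basis (fun i => lam i (e i)) HL.
have [K K_basis] := fin_all_exists K_ex.
have K_free e := (K_basis e).1; have K_span e := (K_basis e).2.
exists (lker (sing_map S K)); split=> [g|].
  have g_sing := sing_locusE d_neq0 K_span HSTheta HSPi g.
  by rewrite memv_ker; split=> [/eqP/g_sing | /g_sing/eqP].
rewrite -(sing_locus_dim d_neq0 Hlam_inj K_free K_span HSfree HSTheta HSPi).
congr (_ + _)%N; rewrite !card_prod card_sig cardsE !card_ord subSn // addn1 mulnC mulnA.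
by congr (_ * _ * _)%N; apply: eq_card.
Qed.
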